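(* For variables $a,b,\alpha,\beta$ and any natural number $n\ge1$, \[ \frac{1}{\lfloor n/2\rfloor!}\Big(\alpha\frac{\partial}{\partial a}+\beta\frac{\partial}{\partial b}\Big)^{\lfloor n/2\rfloor}\Psi(a,b,n)=\Psi(\alpha,\beta,n),\qquad \frac{1}{\lfloor (n-1)/2\rfloor!}\Big(\alpha\frac{\partial}{\partial a}+\beta\frac{\partial}{\partial b}\Big)^{\lfloor (n-1)/2\rfloor}\Phi(a,b,n)=\Phi(\alpha,\beta,n), \] where $\alpha,\beta$ are treated as constants under $\partial/\partial a,\partial/\partial b$.
   Context: $\delta(m)=1$ for $m$ odd, $0$ for $m$ even; $\lfloor\cdot\rfloor$ is the floor. $\Psi(a,b,n)$, $\Phi(a,b,n)$ are the polynomials in $a,b$ defined by $\Psi(a,b,0)=2$, $\Psi(a,b,1)=1$, $\Psi(a,b,n+1)=(2a-b)^{\delta(n)}\Psi(a,b,n)-a\Psi(a,b,n-1)$ and $\Phi(a,b,0)=0$, $\Phi(a,b,1)=1$, $\Phi(a,b,n+1)=(2a-b)^{\delta(n+1)}\Phi(a,b,n)-a\Phi(a,b,n-1)$ for $n\ge1$. *)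

From mathcomp Require Import all_boot all_algebra.
From mathcomp Require Import mpoly.
Set Implicit Arguments. Unset Strict Implicit. Unset Printing Implicit Defensive.
Import GRing.Theory.
Local Open Scope ring_scope.

(* delta(m) = 1 if m odd, 0 if m even; (2a-b)^delta(m) *)
Definition coefd {R : ringType} (a b : R) (m : nat) : R :=
  if odd m then 2 * a - b else 1.

(* psi_pair a b m = (Psi(a,b,m), Psi(a,b,m+1)) *)
Fixpoint psi_pair {R : ringType} (a b : R) (m : nat) : R * R :=
  match m with
  | 0 => (2, 1)
  | m'.+1 => let: (x, y) := psi_pair a b m' in
             (y, coefd a b m'.+1 * y - a * x)
  end.
Definition Psi {R : ringType} (a b : R) (n : nat) : R := (psi_pair a b n).1.

(* phi_pair a b m = (Phi(a,b,m), Phi(a,b,m+1));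
   Phi(n+1) = (2a-b)^delta(n+1) Phi(n) - a Phi(n-1) *)
Fixpoint phi_pair {R : ringType} (a b : R) (m : nat) : R * R :=
  match m with
  | 0 => (0, 1)
  | m'.+1 => let: (x, y) := phi_pair a b m' in
             (y, coefd a b m'.+2 * y - a * x)
  end.
Definition Phi {R : ringType} (a b : R) (n : nat) : R := (phi_pair a b n).1.

Notation P4 := {mpoly rat[4]}.
Definition va : P4 := 'X_(@Ordinal 4 0 isT).
Definition vb : P4 := 'X_(@Ordinal 4 1 isT).
Definition valpha : P4 := 'X_(@Ordinal 4 2 isT).
Definition vbeta : P4 := 'X_(@Ordinal 4 3 isT).

Definition Dop (p : P4) : P4 :=
  valpha * mderiv (@Ordinal 4 0 isT) p + vbeta * mderiv (@Ordinal 4 1 isT) p.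

From HB Require Import structures.
From mathcomp Require Import all_boot all_algebra.
From mathcomp Require Import mpoly.
From mathcomp Require Import ring.
Set Implicit Arguments. Unset Strict Implicit. Unset Printing Implicit Defensive.
Import GRing.Theory Num.Theory.
Local Open Scope ring_scope.

(* For D = alpha d/da + beta d/db, D^k p / k! is the coefficient of t^k in
   p(a + t alpha, b + t beta).  Call (k, g) the top derivative of p when
   D^(k+1) p = 0 and D^k p = k! g.  Multiplying by u with D (D u) = 0 (a linear
   form in a, b) turns the top derivative (k, g) into (k + 1, D u * g), and a
   difference of terms with the same k has the difference of their tops.  The
   recurrences of Psi(n) and of Phi(n + 1) alternately multiply by the linear
   forms 2a - b and a, which D maps to 2 alpha - beta and alpha, so the top
   derivative of Psi(a, b, n) is (n/2, Psi(alpha, beta, n)), and likewise for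
   Phi. *)

Definition coefd_rec (R : nzRingType) (a b : R) (x : nat -> R) :=
  forall n, x n.+2 = coefd a b n.+1 * x n.+1 - a * x n.

Lemma Psi_coefd_rec (R : nzRingType) (a b : R) : coefd_rec a b (Psi a b).
Proof. by move=> n; rewrite /Psi /=; case: psi_pair. Qed.

Lemma Phi_coefd_rec (R : nzRingType) (a b : R) :
  coefd_rec a b (fun n => Phi a b n.+1).
Proof. by move=> n; rewrite /Phi /=; case: phi_pair => ? ? /=; rewrite /coefd /= negbK. Qed.

Section Derivation.
Variables (R : nzRingType) (D : {additive R -> R}).
Hypothesis DM : forall x y, D (x * y) = D x * y + x * D y.

Lemma derivation1 : D 1 = 0.
Proof. by apply: (addIr (D 1)); rewrite add0r -{3}(mulr1 1) DM mulr1 mul1r. Qed.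

Lemma derivation_natr k : D k%:R = 0.
Proof. by rewrite raddfMn derivation1 mul0rn. Qed.

Lemma iter_raddfB j p q : iter j D (p - q) = iter j D p - iter j D q.
Proof. by elim: j => //= j ->; rewrite raddfB. Qed.

Lemma iter_derivationMl u p j : D (D u) = 0 ->
  iter j D (u * p) = u * iter j D p + (D u * iter j.-1 D p) *+ j.
Proof.
move=> DDu; elim: j => [|j IH]; first by rewrite mulr0n addr0.
rewrite iterS IH raddfD DM raddfMn DM DDu mul0r add0r.
case: j {IH} => [|j] /=; first by rewrite mulr0n addr0 mulr1n addrC.
by rewrite [in RHS]mulrS [RHS]addrCA addrA.
Qed.

Definition top_deriv k p g := iter k.+1 D p = 0 /\ iter k D p = g *+ k`!.

Lemma top_deriv_const c : D c = 0 -> top_deriv 0 c c.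
Proof. by []. Qed.

Lemma top_derivB k p q g h :
  top_deriv k p g -> top_deriv k q h -> top_deriv k (p - q) (g - h).
Proof.
by move=> [p0 pk] [q0 qk]; rewrite /top_deriv !iter_raddfB p0 q0 pk qk subrr mulrnBl.
Qed.

Lemma top_derivMl k u p g : D (D u) = 0 ->
  top_deriv k p g -> top_deriv k.+1 (u * p) (D u * g).
Proof.
move=> DDu [p0 pk]; have p1 : iter k.+2 D p = 0 by rewrite iterS p0 raddf0.
split; rewrite iter_derivationMl //; first by rewrite p1 p0 !mulr0 add0r mul0rn.
by rewrite p0 mulr0 add0r pk mulrnAr -mulrnA factS mulnC.
Qed.

Variables a b : R.
Hypotheses (DDa : D (D a) = 0) (DDb : D (D b) = 0).

Lemma top_deriv_coefd_rec x y :
  coefd_rec a b x -> coefd_rec (D a) (D b) y ->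
  top_deriv 0 (x 0) (y 0) -> top_deriv 0 (x 1) (y 1) ->
  forall n, top_deriv n./2 (x n) (y n).
Proof.
move=> xrec yrec x0 x1.
suff top_pair m : top_deriv m (x m.*2) (y m.*2) /\ top_deriv m (x m.*2.+1) (y m.*2.+1).
  move=> n; rewrite -(odd_double_half n) half_bit_double.
  by case: (odd n); case: (top_pair n./2).
have D2ab : D (2 * a - b) = 2 * D a - D b by rewrite !mulr_natl raddfB raddfMn.
have DD2ab : D (D (2 * a - b)) = 0.
  by rewrite D2ab !mulr_natl raddfB raddfMn DDa DDb mul0rn subr0.
elim: m => [|m [xe xo]] //.
have xe' : top_deriv m.+1 (x m.+1.*2) (y m.+1.*2).
  rewrite doubleS xrec yrec /coefd /= odd_double /= -D2ab.
  by apply: top_derivB; apply: top_derivMl.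
split=> //.
rewrite doubleS xrec yrec /coefd /= odd_double /= !mul1r -doubleS.
by apply: top_derivB => //; apply: top_derivMl.
Qed.

Lemma top_deriv_Psi n : top_deriv n./2 (Psi a b n) (Psi (D a) (D b) n).
Proof.
apply: top_deriv_coefd_rec; try exact: Psi_coefd_rec; apply: top_deriv_const.
- exact: (derivation_natr 2).
- exact: derivation1.
Qed.

Lemma top_deriv_Phi n : (0 < n)%N ->
  top_deriv n.-1./2 (Phi a b n) (Phi (D a) (D b) n).
Proof.
have Phi1 (c d : R) : Phi c d 1 = 1 by [].
have Phi2 (c d : R) : Phi c d 2 = 1 by rewrite /Phi /coefd /= mulr1 mulr0 subr0.
case: n => // n _.
apply: (top_deriv_coefd_rec (Phi_coefd_rec a b) (Phi_coefd_rec _ _));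
  by rewrite ?Phi1 ?Phi2; apply: top_deriv_const; exact: derivation1.
Qed.

End Derivation.

Lemma scaleVr_mulrn (F : numFieldType) (V : lmodType F) k (v : V) :
  (0 < k)%N -> (k%:R : F)^-1 *: (v *+ k) = v.
Proof. by move=> k_gt0; rewrite -scaler_nat scalerA mulVf ?scale1r // pnatr_eq0 -lt0n. Qed.

Lemma mderiv_mpolyX (R : nzRingType) n (i j : 'I_n) :
  mderiv i ('X_j : {mpoly R[n]}) = (j == i)%:R.
Proof.
rewrite mderivX mnm1E; case: eqP => [->|_]; last by rewrite scale0r.
by rewrite -{1}[U_(i)%MM]add0m addmK scale1r mpolyX0.
Qed.

Lemma Dop_is_zmod_morphism : zmod_morphism Dop.
Proof. by move=> p q; rewrite /Dop !mderivB; ring. Qed.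

HB.instance Definition _ := GRing.isZmodMorphism.Build P4 P4 Dop Dop_is_zmod_morphism.

Lemma DopM p q : Dop (p * q) = Dop p * q + p * Dop q.
Proof. by rewrite /Dop !mderivM; ring. Qed.

Lemma Dop_va : Dop va = valpha.
Proof. by rewrite /Dop !mderiv_mpolyX /= mulr1 mulr0 addr0. Qed.

Lemma Dop_vb : Dop vb = vbeta.
Proof. by rewrite /Dop !mderiv_mpolyX /= mulr1 mulr0 add0r. Qed.

Lemma Dop_valpha : Dop valpha = 0.
Proof. by rewrite /Dop !mderiv_mpolyX /= !mulr0 addr0. Qed.

Lemma Dop_vbeta : Dop vbeta = 0.
Proof. by rewrite /Dop !mderiv_mpolyX /= !mulr0 addr0. Qed.

Theorem theorem8p5 (n : nat) : (1 <= n)%N ->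
  ((n./2)`!%:R)^-1 *: iter n./2 Dop (Psi va vb n) = Psi valpha vbeta n /\
  (((n.-1)./2)`!%:R)^-1 *: iter (n.-1)./2 Dop (Phi va vb n) = Phi valpha vbeta n.
Proof.
move=> n_gt0; rewrite -Dop_va -Dop_vb.
have DDva : Dop (Dop va) = 0 by rewrite Dop_va Dop_valpha.
have DDvb : Dop (Dop vb) = 0 by rewrite Dop_vb Dop_vbeta.
have [_ ->] := top_deriv_Psi DopM DDva DDvb n.
have [_ ->] := top_deriv_Phi DopM DDva DDvb n_gt0.
by rewrite !scaleVr_mulrn ?fact_gt0.
Qed.
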